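(* Let $\mathcal{H},\mathcal{K}$ be complex Hilbert spaces and $(f_*,f^* ):(\mathsf{P}(\mathcal{H}),\mathsf{L}(\mathcal{H}),\bar e_{\mathcal{H}})\to(\mathsf{P}(\mathcal{K}),\mathsf{L}(\mathcal{K}),\bar e_{\mathcal{K}})$ a Chu morphism. Define $f^{\rightarrow}:\mathsf{L}(\mathcal{H})\to\mathsf{L}(\mathcal{K})$ by $f^{\rightarrow}(S)=\bigvee\{f_*([\psi]):\psi\in S,\psi\ne0\}$ (join in the lattice $\mathsf{L}(\mathcal{K})$). Then $f^{\rightarrow}$ is left adjoint to $f^*$: for all $S\in\mathsf{L}(\mathcal{H})$ and $T\in\mathsf{L}(\mathcal{K})$, $f^{\rightarrow}(S)\subseteq T$ if and only if $S\subseteq f^*(T)$.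
   Context: A Chu morphism $(X,A,e)\to(X',A',e')$ between Chu spaces over $[0,1]$ is a pair $(f_*:X\to X',f^*:A'\to A)$ with $e(x,f^*(a'))=e'(f_*(x),a')$ for all $x,a'$. For a complex Hilbert space $\mathcal{H}$: $\mathsf{L}(\mathcal{H})$ is the lattice of closed subspaces ordered by inclusion, $P_S$ the orthogonal projector onto $S$, $\mathsf{P}(\mathcal{H})$ the set of rays $[\psi]=\{\lambda\psi:\lambda\in\mathbb{C}\}$, $\psi\ne0$, and $\bar e_{\mathcal{H}}([\psi],S)=\|P_S\psi\|^2/\|\psi\|^2$. *)

From HB Require Import structures.
From mathcomp Require Import all_boot all_order all_algebra.
From mathcomp Require Import complex.
From mathcomp Require Import boolp classical_sets reals.
Set Implicit Arguments.
Unset Strict Implicit.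
Unset Printing Implicit Defensive.
Import Order.TTheory GRing.Theory Num.Theory.
Local Open Scope ring_scope.
Local Open Scope classical_set_scope.

Definition ipnorm (R : realType) (V : lmodType R[i]) (ip : V -> V -> R[i])
  (x : V) : R := Num.sqrt (@complex.Re R (ip x x)).

Record isHilbert (R : realType) (V : lmodType R[i]) (ip : V -> V -> R[i])
  : Prop := {
  ip_linl : forall (a : R[i]) (x y z : V), ip (a *: x + y) z = a * ip x z + ip y z;
  ip_csym : forall x y : V, ip y x = conjc (ip x y);
  ip_ge0 : forall x : V, 0 <= ip x x;
  ip_def : forall x : V, ip x x = 0 -> x = 0;
  ip_complete : forall u : nat -> V,
    (forall e : R, 0 < e -> exists N : nat, forall m n : nat,
        (N <= m)%N -> (N <= n)%N -> ipnorm ip (u m - u n) < e) ->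
    exists l : V, forall e : R, 0 < e -> exists N : nat, forall n : nat,
        (N <= n)%N -> ipnorm ip (u n - l) < e
}.

Record HilbertSpace (R : realType) := {
  hcarrier :> lmodType R[i];
  hip : hcarrier -> hcarrier -> R[i];
  hax : isHilbert hip
}.

Section Hilb.
Variables (R : realType) (H : HilbertSpace R).

Definition hnorm (x : H) : R := ipnorm (@hip R H) x.

Definition closed_subspace (S : set H) : Prop :=
  [/\ S 0,
      (forall (a : R[i]) (x y : H), S x -> S y -> S (a *: x + y)) &
      (forall (u : nat -> H) (l : H), (forall n, S (u n)) ->
         (forall e : R, 0 < e -> exists N : nat, forall n : nat,
             (N <= n)%N -> hnorm (u n - l) < e) -> S l)].

Definition LH := {S : set H | closed_subspace S}.

Definition ray (psi : H) : set H := [set a *: psi | a in [set: R[i]]].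

Definition PH := {r : set H | exists2 psi : H, psi != 0 & r = ray psi}.

(* orthogonal projection P_S psi: the (unique, for closed S) p in S with
   psi - p orthogonal to S *)
Definition proj (S : set H) (psi : H) : H :=
  xget 0 [set p | S p /\ forall s, S s -> hip (psi - p) s = 0].

(* a chosen nonzero representative of a ray (the value of ebar does not
   depend on the choice) *)
Definition rep (r : PH) : H := xget 0 [set x | sval r x /\ x != 0].

Definition ebar (r : PH) (S : LH) : R :=
  hnorm (proj (sval S) (rep r)) ^+ 2 / hnorm (rep r) ^+ 2.

Definition Ljoin (F : set (set H)) : set H :=
  [set x | forall T : set H, closed_subspace T ->
             (forall A, F A -> A `<=` T) -> T x].

End Hilb.

Definition chu_morphism (R : realType) (H K : HilbertSpace R)
  (fs : PH H -> PH K) (fp : LH K -> LH H) : Prop :=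
  forall (x : PH H) (a' : LH K), ebar x (fp a') = ebar (fs x) a'.

Definition fto (R : realType) (H K : HilbertSpace R)
  (fs : PH H -> PH K) (S : LH H) : set K :=
  Ljoin [set A : set K | exists (r : PH H) (psi : H),
          [/\ sval S psi, psi != 0, sval r = ray psi & A = sval (fs r)]].

(* A ray lies in a closed subspace S exactly when [ebar [psi] S = 1]: by
   Pythagoras ||psi||^2 = ||P_S psi||^2 + ||psi - P_S psi||^2, so equality of
   norms forces psi = P_S psi.  The Chu condition therefore says that [psi] is
   contained in f^*(T) iff f_*([psi]) is contained in T, and the adjunction
   follows because f^->(S) is the least closed subspace containing all the
   f_*([psi]) with psi in S. *)
From mathcomp Require Import all_boot all_order all_algebra.
From mathcomp Require Import complex.
From mathcomp Require Import boolp classical_sets reals.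
Set Implicit Arguments.
Unset Strict Implicit.
Unset Printing Implicit Defensive.
Import GRing.Theory Num.Theory.
Local Open Scope classical_set_scope.

Section InnerProduct.
Local Open Scope ring_scope.
Variables (R : realType) (H : HilbertSpace R).
Local Notation ip := (@hip R H).
Let ax := hax H.

Lemma ipDl (x y z : H) : ip (x + y) z = ip x z + ip y z.
Proof. by have := ip_linl ax 1 x y z; rewrite scale1r mul1r. Qed.

Lemma ip0l (z : H) : ip 0 z = 0.
Proof. by apply: (addrI (ip 0 z)); rewrite -ipDl !addr0. Qed.

Lemma ipDr (x y z : H) : ip x (y + z) = ip x y + ip x z.
Proof. by rewrite !(ip_csym ax _ x) ipDl -rmorphD. Qed.

Lemma ipxx_real (x : H) : ip x x = (complex.Re (ip x x))%:C%C.
Proof.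
by have := ip_ge0 ax x; case: (ip x x) => a b; rewrite lecE /= => /andP[/eqP -> _].
Qed.

Lemma hnorm_sqr (x : H) : hnorm x ^+ 2 = complex.Re (ip x x).
Proof.
by rewrite /hnorm /ipnorm sqr_sqrtr //; have := ip_ge0 ax x; rewrite lecE => /andP[].
Qed.

Lemma hnorm_sqr_eq0 (x : H) : (hnorm x ^+ 2 == 0) = (x == 0).
Proof.
apply/eqP/eqP => [|->]; last by rewrite hnorm_sqr ip0l.
by rewrite hnorm_sqr => x0; apply: (ip_def ax); rewrite ipxx_real x0.
Qed.

Lemma hnorm_sqr_pythagoras (x y : H) : ip x y = 0 ->
  hnorm (x + y) ^+ 2 = hnorm x ^+ 2 + hnorm y ^+ 2.
Proof.
move=> xy0; have yx0 : ip y x = 0 by rewrite (ip_csym ax) xy0 rmorph0.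
by rewrite !hnorm_sqr ipDl !ipDr xy0 yx0 addr0 add0r raddfD.
Qed.

End InnerProduct.

Section ClosedSubspace.
Local Open Scope ring_scope.
Variables (R : realType) (H : HilbertSpace R) (S : set H).
Hypothesis S_closed : closed_subspace S.

Lemma closed_subspace0 : S 0.
Proof. by case: S_closed. Qed.

Lemma closed_subspaceZ a (x : H) : S x -> S (a *: x).
Proof.
by case: S_closed => S0 SZD _ Sx; rewrite -[_ *: _]addr0; apply: SZD.
Qed.

Lemma closed_subspaceB (x y : H) : S x -> S y -> S (x - y).
Proof.
by case: S_closed => _ SZD _ Sx Sy; rewrite -scaleN1r addrC; apply: SZD.
Qed.

Lemma proj_id (psi : H) : S psi -> proj S psi = psi.
Proof.
move=> Spsi; apply: xget_unique; first by split => // s _; rewrite subrr ip0l.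
move=> p [Sp orth]; apply/eqP; rewrite eq_sym -subr_eq0 -hnorm_sqr_eq0 hnorm_sqr.
by rewrite orth //; apply: closed_subspaceB.
Qed.

Lemma proj_norm_eq (psi : H) : hnorm (proj S psi) ^+ 2 = hnorm psi ^+ 2 -> S psi.
Proof.
rewrite /proj; case: xgetP => [p _ [Sp orth] E|_ /esym/eqP].
  have porth : hip p (psi - p) = 0 by rewrite (ip_csym (hax H)) orth // rmorph0.
  have := hnorm_sqr_pythagoras porth; rewrite subrKC -E -[LHS]addr0 => /addrI/esym/eqP.
  by rewrite hnorm_sqr_eq0 subr_eq0 => /eqP->.
have -> : hnorm (0 : H) ^+ 2 = 0 by apply/eqP; rewrite hnorm_sqr_eq0.
by rewrite hnorm_sqr_eq0 => /eqP->; exact: closed_subspace0.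
Qed.

Lemma ray_subP (psi : H) : ray psi `<=` S <-> S psi.
Proof.
split=> [|Spsi _ [a _ <-]]; last exact: closed_subspaceZ.
by apply; exists 1; rewrite ?scale1r.
Qed.

End ClosedSubspace.

Section Rays.
Local Open Scope ring_scope.
Variables (R : realType) (H : HilbertSpace R).

Definition ray_of (psi : H) (psi0 : psi != 0) : PH H :=
  exist _ (ray psi) (ex_intro2 _ _ psi psi0 erefl).

Lemma rep_ray (r : PH H) : rep r != 0 /\ sval r = ray (rep r).
Proof.
have [psi psi0 r_psi] := svalP r.
have : sval r (rep r) /\ rep r != 0.
  apply: (@xgetPex _ 0 [set x | sval r x /\ x != 0]).
  by exists psi; rewrite r_psi; split=> //; exists 1; rewrite ?scale1r.
rewrite r_psi => -[[a _ <-] apsi0]; split => //.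
have a0 : a != 0 by apply: contraNneq apsi0 => ->; rewrite scale0r.
rewrite predeqE => x; split=> [[c _ <-]|[c _ <-]].
  by exists (c / a) => //; rewrite scalerA divfK.
by exists (c * a) => //; rewrite scalerA.
Qed.

Lemma ebar1P (r : PH H) (S : LH H) : ebar r S = 1 <-> sval r `<=` sval S.
Proof.
have [rep0 ->] := rep_ray r; rewrite ray_subP; last exact: svalP.
rewrite /ebar; split=> [/divr1_eq/(proj_norm_eq (svalP S))//|/(proj_id (svalP S))->].
by rewrite divff // hnorm_sqr_eq0.
Qed.

Lemma sub_Ljoin (F : set (set H)) (A : set H) : F A -> A `<=` Ljoin F.
Proof. by move=> FA x Ax T _ FT; exact: FT FA x Ax. Qed.

Lemma Ljoin_sub (F : set (set H)) (T : set H) : closed_subspace T ->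
  (forall A, F A -> A `<=` T) -> Ljoin F `<=` T.
Proof. by move=> T_closed FT x; exact. Qed.

End Rays.

Lemma chu_ray_subP (R : realType) (H K : HilbertSpace R)
    (fs : PH H -> PH K) (fp : LH K -> LH H) :
  chu_morphism fs fp ->
  forall (r : PH H) (T : LH K), sval r `<=` sval (fp T) <-> sval (fs r) `<=` sval T.
Proof. by move=> chu r T; rewrite -!ebar1P chu. Qed.

Theorem lemma3p8 (R : realType) (H K : HilbertSpace R)
  (fs : PH H -> PH K) (fp : LH K -> LH H) :
  chu_morphism fs fp ->
  forall (S : LH H) (T : LH K),
    fto fs S `<=` sval T <-> sval S `<=` sval (fp T).
Proof.
move=> chu S T; split=> [ftoT psi Spsi|SfpT].
- have [->|psi0] := eqVneq psi 0%R; first exact: closed_subspace0 (svalP (fp T)).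
  apply/(ray_subP (svalP (fp T))); rewrite -[ray psi]/(sval (ray_of psi0)).
  apply/(chu_ray_subP chu); apply: subset_trans ftoT; apply: sub_Ljoin.
  by exists (ray_of psi0), psi.
- apply: Ljoin_sub; first exact: svalP.
  move=> _ [r [psi [Spsi _ r_psi ->]]]; apply/(chu_ray_subP chu).
  by rewrite r_psi; apply/(ray_subP (svalP (fp T))); apply: SfpT.
Qed.
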